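(* Let $Y_0$ and $Y_1$ be real-valued random variables on a common probability space, with marginal cumulative distribution functions $F_0$ and $F_1$, and let $Q_0(u)=\inf\{y\in\mathbb{R}: F_0(y)\geq u\}$ be the left-continuous generalized inverse of $F_0$. Let $U\sim U(0,1)$ be a random variable on the same space with $Y_0=Q_0(U)$ (the joint distribution of $(U,Y_1)$ is otherwise arbitrary). Then for every $0\leq a<b\leq 1$, \[ \sup_{x\in(a,b)}[x-a-F_1(Q_0(x))]_+\leq P(a<U<b,\ Y_0<Y_1)\leq b-a-\sup_{x\in(a,b)}[b-x-1+F_1(Q_0(x))]_+, \] \[ \sup_{x\in(a,b)}[b-x-1+F_1(Q_0(x)-)]_+\leq P(a<U<b,\ Y_0>Y_1)\leq b-a-\sup_{x\in(a,b)}[x-a-F_1(Q_0(x)-)]_+. \] Moreover, given the marginals ($U\sim U(0,1)$, $Y_0=Q_0(U)$, and $Y_1$ with cdf $F_1$): for each of the two lower bounds there exists a joint distribution of $(U,Y_1)$ for which that lower bound is attained (holds with equality), and for each of the two upper bounds and every $\varepsilon>0$ there exists a joint distribution of $(U,Y_1)$ for which the corresponding probability is within $\varepsilon$ of that upper bound. Finally, all four bounds, viewed as functions of $(a,b)$, are nonincreasing and Lipschitz in $a$ and nondecreasing and Lipschitz in $b$.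
   Context: For real $x$, $[x]_+=\max\{x,0\}$. For a cdf $F$, $F(y-)=\lim_{x\nearrow y}F(x)$ denotes its left limit at $y$. *)

From HB Require Import structures.
From mathcomp Require Import all_boot all_order all_algebra.
From mathcomp Require Import all_classical all_reals all_analysis.
Set Implicit Arguments. Unset Strict Implicit. Unset Printing Implicit Defensive.
Import Order.TTheory GRing.Theory Num.Theory.
Import numFieldNormedType.Exports.
Local Open Scope classical_set_scope.
Local Open Scope ring_scope.

Section Defs.
Context {R : realType}.

Definition posp (x : R) : R := Num.max x 0.

Definition cdfRV d (T : measurableType d) (P : probability T R) (X : T -> R)
  : R -> R := fun y => fine (P [set t | X t <= y]).

Definition qinv (F : R -> R) (u : R) : R := inf [set y | u <= F y].

Definition leftlim (F : R -> R) (y : R) : R := lim (F x @[x --> y^'-]).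

Definition uniform01 d (T : measurableType d) (P : probability T R) (U : T -> R)
  : Prop := forall x : R, P [set t | U t <= x] = (Num.max 0 (Num.min x 1))%:E.

Definition low_lt (F0 F1 : R -> R) (a b : R) : R :=
  sup [set posp (x - a - F1 (qinv F0 x)) | x in `]a, b[].
Definition upp_lt (F0 F1 : R -> R) (a b : R) : R :=
  b - a - sup [set posp (b - x - 1 + F1 (qinv F0 x)) | x in `]a, b[].
Definition low_gt (F0 F1 : R -> R) (a b : R) : R :=
  sup [set posp (b - x - 1 + leftlim F1 (qinv F0 x)) | x in `]a, b[].
Definition upp_gt (F0 F1 : R -> R) (a b : R) : R :=
  b - a - sup [set posp (x - a - leftlim F1 (qinv F0 x)) | x in `]a, b[].

Definition monotone_lipschitz_ab (f : R -> R -> R) : Prop :=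
  [/\ (forall a a' b, 0 <= a -> a <= a' -> a' < b -> b <= 1 -> f a' b <= f a b),
      (exists L : R, forall a a' b, 0 <= a -> 0 <= a' -> a < b -> a' < b -> b <= 1 ->
          `|f a b - f a' b| <= L * `|a - a'|),
      (forall a b b', 0 <= a -> a < b -> b <= b' -> b' <= 1 -> f a b <= f a b') &
      (exists L : R, forall a b b', 0 <= a -> a < b -> a < b' -> b <= 1 -> b' <= 1 ->
          `|f a b - f a b'| <= L * `|b - b'|)].

(* a joint law mu of (U, Y1) on R x R with U ~ U(0,1) and Y1 having cdf F1 *)
Definition coupling_law (F1 : R -> R) (mu : probability (R * R)%type R) : Prop :=
  (forall x : R, mu [set p | p.1 <= x] = (Num.max 0 (Num.min x 1))%:E) /\
  (forall y : R, mu [set p | p.2 <= y] = (F1 y)%:E).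

End Defs.

From HB Require Import structures.
From mathcomp Require Import all_boot all_order all_algebra.
From mathcomp Require Import all_classical all_reals all_analysis.
From mathcomp Require Import lra measurable_realfun.
Import Order.TTheory GRing.Theory Num.Theory.
Import numFieldNormedType.Exports.
Local Open Scope classical_set_scope.
Local Open Scope ring_scope.

(* For x in (a,b), monotonicity of Q0 covers {a < U < x} by the union of
   {a < U < b, Y0 < Y1} and {Y1 <= Q0 x}, whence
   P(a < U < b, Y0 < Y1) >= x - a - F1(Q0 x); the other three bounds come from
   the same kind of covering, applied to {x < U < b} and to the complementary
   events.  The bounds are attained, or approached, by the couplings Y1 = Q1(V)
   where V = U - c mod 1 is again uniform and Q1 is the left- or
   right-continuous quantile function of F1: for a well-chosen c, whether Y1
   exceeds Y0 is decided, off a null set, by the position of U relative to c.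
   Monotonicity and Lipschitz continuity in (a,b) are elementary properties of
   the suprema of [x - a - h x]_+ and [b - x - 1 + h x]_+ for nondecreasing h
   with values in [0,1]. *)

Definition pr {d} {T : measurableType d} {R : realType} (P : probability T R)
  (A : set T) : R := fine (P A).

Section real_probability.
Context {d} {T : measurableType d} {R : realType} {P : probability T R}.
Local Notation pr := (pr P).
Implicit Types A B C N : set T.

Lemma prE {A} : measurable A -> P A = (pr A)%:E.
Proof. by move=> mA; rewrite /pr fineK// fin_num_measure. Qed.

Lemma pr_ge0 A : 0 <= pr A.
Proof. by rewrite /pr fine_ge0. Qed.

Lemma pr_le1 {A} : measurable A -> pr A <= 1.
Proof. by move=> mA; rewrite -lee_fin -prE// probability_le1. Qed.

Lemma pr_setT : pr setT = 1.
Proof. by rewrite /pr probability_setT. Qed.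

Lemma le_pr {A B} : measurable A -> measurable B -> A `<=` B -> pr A <= pr B.
Proof. by move=> mA mB AB; rewrite -lee_fin -!prE// le_measure// inE. Qed.

Lemma pr_setU_le {A B} : measurable A -> measurable B -> pr (A `|` B) <= pr A + pr B.
Proof.
move=> mA mB; rewrite -lee_fin EFinD -!prE//; last exact: measurableU.
exact: measureU2.
Qed.

Lemma pr_setU {A B} : measurable A -> measurable B -> A `&` B = set0 ->
  pr (A `|` B) = pr A + pr B.
Proof.
move=> mA mB AB; apply: EFin_inj; rewrite EFinD -!prE//; last exact: measurableU.
by rewrite measureU.
Qed.

Lemma pr_setC {A} : measurable A -> pr (~` A) = 1 - pr A.
Proof.
move=> mA; apply: EFin_inj; rewrite -prE; last exact: measurableC.
by rewrite probability_setC// prE.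
Qed.

Lemma pr_subsetU {A B C} : measurable A -> measurable B -> measurable C ->
  A `<=` B `|` C -> pr A - pr C <= pr B.
Proof.
move=> mA mB mC ABC; rewrite lerBlDr (le_trans _ (pr_setU_le mB mC))//.
by apply: le_pr => //; exact: measurableU.
Qed.

Lemma pr_disjointU_le {A B C} : measurable A -> measurable B -> measurable C ->
  A `&` B = set0 -> A `|` B `<=` C -> pr A + pr B <= pr C.
Proof.
move=> mA mB mC AB ABC; rewrite -pr_setU//.
by apply: le_pr => //; exact: measurableU.
Qed.

Lemma pr_eq_outside_null {A B N} : measurable A -> measurable B -> measurable N ->
  pr N = 0 -> A `\` N `<=` B -> B `\` N `<=` A -> pr A = pr B.
Proof.
move=> mA mB mN N0 AB BA; apply/eqP; rewrite eq_le.
have cover X Y : measurable X -> measurable Y -> X `\` N `<=` Y -> pr X <= pr Y.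
  move=> mX mY XY; have := @pr_subsetU X Y N mX mY mN; rewrite N0 subr0; apply.
  by move=> t Xt; have [Nt|Nt] := pselect (N t); [right|left; apply: XY].
by rewrite !cover.
Qed.

Lemma pr_nonincreasing_lt {F : (set T)^nat} {v} : (forall n, measurable (F n)) ->
  nonincreasing_seq F -> pr (\bigcap_n F n) < v -> exists n, pr (F n) < v.
Proof.
move=> mF niF Fv; have mI : measurable (\bigcap_n F n) by exact: bigcap_measurable.
have F0 : (P (F 0%N) < +oo)%E.
  by rewrite (le_lt_trans (probability_le1 P (mF 0%N))) ?ltry.
have PF : (P \o F) n @[n --> \oo] --> (pr (\bigcap_n F n))%:E.
  by rewrite -prE//; exact: nonincreasing_cvg_mu.
exact: filter_ex (cvgr_lt _ (fine_cvg PF) _ Fv).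
Qed.

Lemma pr_nondecreasing_gt {F : (set T)^nat} {v} : (forall n, measurable (F n)) ->
  nondecreasing_seq F -> v < pr (\bigcup_n F n) -> exists n, v < pr (F n).
Proof.
move=> mF ndF Fv; have mU : measurable (\bigcup_n F n) by exact: bigcup_measurable.
have PF : (P \o F) n @[n --> \oo] --> (pr (\bigcup_n F n))%:E.
  by rewrite -prE//; exact: nondecreasing_cvg_mu.
exact: filter_ex (cvgr_gt _ (fine_cvg PF) _ Fv).
Qed.

End real_probability.

Lemma natSinv_lt {R : realType} (x : R) : 0 < x -> exists n : nat, n.+1%:R^-1 < x.
Proof.
move=> x0; exists (Num.truncn x^-1).
rewrite -[ltRHS]invrK ltf_pV2 ?posrE ?invr_gt0//.
exact: archimedean.Num.Theory.truncnS_gt.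
Qed.

Section measurable_sets.
Context {d} {T : measurableType d} {R : realType}.
Implicit Types (f g : T -> R) (p : T -> bool).

Lemma measurable_bool_set p : measurable_fun setT p -> measurable [set t | p t].
Proof.
move=> mp; rewrite (_ : [set t | p t] = setT `&` p @^-1` [set true]); first exact: mp.
by apply/seteqP; split => t; rewrite /preimage/=; [move=> ->|case].
Qed.

Lemma measurable_ltr_set {f g} : measurable_fun setT f -> measurable_fun setT g ->
  measurable [set t | f t < g t].
Proof. by move=> mf mg; apply: measurable_bool_set; exact: measurable_fun_ltr. Qed.

Lemma measurable_ler_set {f g} : measurable_fun setT f -> measurable_fun setT g ->
  measurable [set t | f t <= g t].
Proof. by move=> mf mg; apply: measurable_bool_set; exact: measurable_fun_ler. Qed.

Lemma measurable_oo_set {f} a b : measurable_fun setT f ->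
  measurable [set t | a < f t < b].
Proof.
by move=> mf; apply: measurable_bool_set; apply: measurable_and;
  exact: measurable_fun_ltr.
Qed.

Lemma measurable_oc_set {f} a b : measurable_fun setT f ->
  measurable [set t | a < f t <= b].
Proof.
move=> mf; apply: measurable_bool_set; apply: measurable_and;
  [exact: measurable_fun_ltr|exact: measurable_fun_ler].
Qed.

Lemma measurable_eq_set {f} c : measurable_fun setT f -> measurable [set t | f t = c].
Proof.
move=> mf; rewrite (_ : [set t | f t = c] = [set t | f t == c]).
  by apply: measurable_bool_set; exact: measurable_fun_eqr.
by apply/seteqP; split => t /= /eqP.
Qed.

End measurable_sets.

Definition clamp01 {R : realType} (x : R) := Num.max 0 (Num.min x 1).

Section clamp01.
Context {R : realType}.
Implicit Types x e : R.

Lemma clamp01_id x : 0 <= x <= 1 -> clamp01 x = x.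
Proof. by rewrite /clamp01 !maxEle !minEle; repeat case: ifPn; lra. Qed.

Lemma clamp01_le0 x : x <= 0 -> clamp01 x = 0.
Proof. by rewrite /clamp01 !maxEle !minEle; repeat case: ifPn; lra. Qed.

Lemma clamp01_ge1 x : 1 <= x -> clamp01 x = 1.
Proof. by rewrite /clamp01 !maxEle !minEle; repeat case: ifPn; lra. Qed.

Lemma clamp01_lipschitz x e : 0 <= e -> clamp01 x <= clamp01 (x - e) + e.
Proof. by rewrite /clamp01 !maxEle !minEle; repeat case: ifPn; lra. Qed.

End clamp01.

Section uniform.
Context {d} {T : measurableType d} {R : realType} {P : probability T R} {U : T -> R}.
Hypotheses (mU : measurable_fun setT U) (hU : uniform01 P U).
Implicit Types a b c x : R.

Lemma pr_uniform_le x : pr P [set t | U t <= x] = clamp01 x.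
Proof. by rewrite /pr hU. Qed.

Lemma pr_uniform_lt x : pr P [set t | U t < x] = clamp01 x.
Proof.
apply/eqP; rewrite eq_le; apply/andP; split.
  rewrite -pr_uniform_le; apply: le_pr; [exact: measurable_ltr_set|exact: measurable_ler_set|].
  by move=> t /= /ltW.
apply/ler_addgt0Pr => e e0.
rewrite (le_trans (clamp01_lipschitz x e (ltW e0))) // lerD2r -pr_uniform_le.
apply: le_pr; [exact: measurable_ler_set|exact: measurable_ltr_set|].
by move=> t /= h; apply: (le_lt_trans h); rewrite ltrBlDr ltrDl.
Qed.

Lemma pr_uniform_oc {c x} : c <= x -> pr P [set t | c < U t <= x] = clamp01 x - clamp01 c.
Proof.
move=> cx; rewrite -!pr_uniform_le.
rewrite [in RHS](_ : [set t | U t <= x] = [set t | U t <= c] `|` [set t | c < U t <= x]).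
  rewrite pr_setU; [lra|exact: measurable_ler_set|exact: measurable_oc_set|].
  by apply/seteqP; split => t //= [h /andP[h' _]]; lra.
apply/seteqP; split => t /=.
  by move=> h; case: (leP (U t) c) => h'; [left|right; apply/andP].
by case=> [h|/andP[_ h]] //; apply: le_trans h cx.
Qed.

Lemma pr_uniform_eq c : pr P [set t | U t = c] = 0.
Proof.
apply/eqP; rewrite eq_le pr_ge0 andbT; apply/ler_addgt0Pr => e e0; rewrite add0r.
have : pr P [set t | U t = c] <= pr P [set t | c - e < U t <= c].
  apply: le_pr; [exact: measurable_eq_set|exact: measurable_oc_set|].
  by move=> t /= ->; apply/andP; lra.
rewrite pr_uniform_oc; last lra.
by have := clamp01_lipschitz c e (ltW e0); lra.
Qed.

Lemma pr_uniform_oo a b : 0 <= a -> a <= b -> b <= 1 -> pr P [set t | a < U t < b] = b - a.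
Proof.
move=> a0 ab b1.
have -> : [set t | a < U t < b] = [set t | a < U t <= b] `\` [set t | U t = b].
  apply/seteqP; split => t /=; first by move=> /andP[h1 h2]; split; [apply/andP|]; lra.
  by move=> [/andP[h1 h2] /eqP h3]; apply/andP; split => //; rewrite lt_neqAle h3.
have mD : measurable ([set t | a < U t <= b] `\` [set t | U t = b]).
  by apply: measurableD; [exact: measurable_oc_set|exact: measurable_eq_set].
have <- : pr P [set t | a < U t <= b] = b - a.
  by rewrite (pr_uniform_oc ab) !clamp01_id//; apply/andP; lra.
apply/eqP; rewrite eq_le; apply/andP; split.
  by apply: le_pr; [|exact: measurable_oc_set|by move=> t []].
have := pr_subsetU (P := P) (measurable_oc_set a b mU) mD (measurable_eq_set b mU).
rewrite pr_uniform_eq subr0; apply => t h.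
by have [e|ne] := pselect (U t = b); [right|left].
Qed.

Definition uniform_null c :=
  [set t | U t <= 0] `|` [set t | 1 <= U t] `|` [set t | U t = c].

Lemma measurable_uniform_null c : measurable (uniform_null c).
Proof.
apply: measurableU; last exact: measurable_eq_set.
by apply: measurableU; exact: measurable_ler_set.
Qed.

Lemma pr_uniform_null c : pr P (uniform_null c) = 0.
Proof.
have m0 : measurable [set t | U t <= 0] by exact: measurable_ler_set.
have m1 : measurable [set t | 1 <= U t] by exact: measurable_ler_set.
have p0 : pr P [set t | U t <= 0] = 0 by rewrite pr_uniform_le clamp01_id ?lexx ?ler01.
have p1 : pr P [set t | 1 <= U t] = 0.
  rewrite (_ : [set t | 1 <= U t] = ~` [set t | U t < 1]); last first.
    by apply/seteqP; split => t /=; rewrite leNgt => /negP.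
  by rewrite pr_setC ?pr_uniform_lt ?clamp01_id ?lexx ?ler01 ?subrr//; exact: measurable_ltr_set.
apply/eqP; rewrite eq_le pr_ge0 andbT.
have := pr_setU_le (P := P) (measurableU _ _ m0 m1) (measurable_eq_set c mU).
have := pr_setU_le (P := P) m0 m1.
by rewrite p0 p1 pr_uniform_eq /uniform_null; lra.
Qed.

Lemma not_uniform_null c t : ~ uniform_null c t -> 0 < U t < 1 /\ U t != c.
Proof.
rewrite /uniform_null /= => h.
case: (ltP 0 (U t)) => h0; last by exfalso; apply: h; left; left.
case: (ltP (U t) 1) => h1; last by exfalso; apply: h; left; right.
by split; [apply/andP|apply/eqP => e; apply: h; right].
Qed.

End uniform.

Definition rqinv {R : realType} (F : R -> R) (u : R) : R := inf [set y | u < F y].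

(* Right-continuity and the limits 0 and 1 at -oo and +oo, in the form in which
   the quantile functions use them. *)
Definition is_cdf {R : realType} (F : R -> R) : Prop :=
  [/\ nondecreasing_fun F,
      forall y v, F y < v -> exists2 x, y < x & F x < v,
      forall v, 0 < v -> exists y, F y < v &
      forall v, v < 1 -> exists y, v < F y].

Section quantile.
Context {R : realType} {F : R -> R}.
Hypothesis F_cdf : is_cdf F.
Let F_nd : nondecreasing_fun F. Proof. by case: F_cdf. Qed.
Implicit Types u v y z : R.
Let F_right y v : F y < v -> exists2 x, y < x & F x < v.
Proof. by case: F_cdf => _ + _ _; exact. Qed.
Let F_Ny v : 0 < v -> exists y, F y < v.
Proof. by case: F_cdf => _ _ + _; exact. Qed.
Let F_y v : v < 1 -> exists y, v < F y.
Proof. by case: F_cdf => _ _ _; exact. Qed.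

Let lbound_ge {v} : 0 < v -> has_lbound [set y | v <= F y].
Proof.
move=> v0; have [y0 Fy0] := F_Ny v v0; exists y0 => z /= vz.
by rewrite leNgt; apply/negP => /ltW/F_nd; lra.
Qed.

Let lbound_gt {v} : 0 < v -> has_lbound [set y | v < F y].
Proof.
by move=> /lbound_ge[y0 hy0]; exists y0 => z /= /ltW; exact: hy0.
Qed.

Let nonempty_gt {v} : v < 1 -> [set y | v < F y] !=set0.
Proof. by move=> /F_y[y vy]; exists y. Qed.

Let nonempty_ge {v} : v < 1 -> [set y | v <= F y] !=set0.
Proof. by move=> /F_y[y vy]; exists y; exact: ltW. Qed.

Let right_bound {S v y} : S !=set0 -> S `<=` [set z | v <= F z] -> F y < v -> y < inf S.
Proof.
move=> S0 Sv /F_right[x yx Fx]; apply: lt_le_trans yx _.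
apply: lb_le_inf => // z /Sv /= vz; rewrite leNgt; apply/negP => /ltW/F_nd; lra.
Qed.

Lemma qinv_le v y : 0 < v < 1 -> (qinv F v <= y) = (v <= F y).
Proof.
case/andP => v0 v1; apply/idP/idP => [qy|vy]; last by apply: ge_inf => //; exact: lbound_ge.
by rewrite leNgt; apply/negP => /(right_bound (nonempty_ge v1) (@subset_refl _ _)); lra.
Qed.

Lemma qinv_nd u v : 0 < u -> u <= v -> v < 1 -> qinv F u <= qinv F v.
Proof.
move=> u0 uv v1; apply: lb_le_inf; first exact: nonempty_ge.
by move=> z /= vz; rewrite qinv_le; [lra|apply/andP; lra].
Qed.

Lemma rqinv_le v y : 0 < v -> v < F y -> rqinv F v <= y.
Proof. by move=> v0 vy; apply: ge_inf => //; exact: lbound_gt. Qed.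

Lemma le_of_rqinv_le v y : 0 < v < 1 -> rqinv F v <= y -> v <= F y.
Proof.
case/andP => v0 v1 qy; rewrite leNgt; apply/negP.
by move=> /(right_bound (nonempty_gt v1) (fun z => @ltW _ _ _ _)); lra.
Qed.

Lemma le_rqinv v y : v < 1 -> (forall z, z < y -> F z <= v) -> y <= rqinv F v.
Proof.
move=> v1 Fv; apply: lb_le_inf; first exact: nonempty_gt.
by move=> z /= vz; rewrite leNgt; apply/negP => /Fv; lra.
Qed.

Lemma rqinv_nd u v : 0 < u -> u <= v -> v < 1 -> rqinv F u <= rqinv F v.
Proof.
move=> u0 uv v1; apply: lb_le_inf; first exact: nonempty_gt.
by move=> z /= vz; apply: rqinv_le; lra.
Qed.

End quantile.

Section cdfRV.
Context {d} {T : measurableType d} {R : realType} (P : probability T R).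
Variables (Y : T -> R) (mY : measurable_fun setT Y).
Local Notation F := (cdfRV P Y).
Implicit Types v y e : R.

Lemma cdfRV_ge0 y : 0 <= F y.
Proof. exact: pr_ge0. Qed.

Lemma cdfRV_le1 y : F y <= 1.
Proof. by apply: pr_le1; exact: measurable_ler_set. Qed.

Lemma cdfRV_nd : nondecreasing_fun F.
Proof.
move=> x y xy; apply: le_pr; [exact: measurable_ler_set|exact: measurable_ler_set|].
by move=> t /= /le_trans; apply.
Qed.

Lemma cdfRV_right y v : F y < v -> exists2 x, y < x & F x < v.
Proof.
pose A n := [set t | Y t <= y + n.+1%:R^-1].
have mA n : measurable (A n) by exact: measurable_ler_set.
have niA : nonincreasing_seq A.
  move=> m n mn; apply/subsetPset => t /= /le_trans; apply.
  by rewrite lerD2l lef_pV2 ?posrE// ler_nat.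
have -> : F y = pr P (\bigcap_n A n).
  congr (pr P _); apply/seteqP; split => t /=.
    by move=> Yy n _; rewrite /A/= (le_trans Yy)// lerDl.
  move=> YA; rewrite leNgt; apply/negP; rewrite -subr_gt0 => /natSinv_lt[n].
  by rewrite ltrBrDl => /(le_lt_trans (YA n I)); rewrite ltxx.
by move=> /(pr_nonincreasing_lt mA niA)[n An]; exists (y + n.+1%:R^-1); rewrite ?ltrDl.
Qed.

Lemma cdfRV_left y e : 0 < e -> exists2 x, x < y & pr P [set t | Y t < y] - e < F x.
Proof.
move=> e0; pose A n := [set t | Y t <= y - n.+1%:R^-1].
have mA n : measurable (A n) by exact: measurable_ler_set.
have ndA : nondecreasing_seq A.
  move=> m n mn; apply/subsetPset => t /= /le_trans; apply.
  by rewrite lerD2l lerN2 lef_pV2 ?posrE// ler_nat.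
have -> : [set t | Y t < y] = \bigcup_n A n.
  apply/seteqP; split => t /=.
    rewrite -subr_gt0 => /natSinv_lt[n] ?; exists n => //.
    by rewrite /A/= lerBrDr -lerBrDl; exact: ltW.
  by move=> [n _]; rewrite /A/= => /le_lt_trans; apply; rewrite ltrBlDr ltrDl.
have : pr P (\bigcup_n A n) - e < pr P (\bigcup_n A n) by rewrite ltrBlDr ltrDl.
move=> /(pr_nondecreasing_gt mA ndA)[n An]; exists (y - n.+1%:R^-1) => //.
by rewrite ltrBlDr ltrDl.
Qed.

Lemma cdfRV_Ny v : 0 < v -> exists y, F y < v.
Proof.
pose A n := [set t | Y t <= - n%:R].
have mA n : measurable (A n) by exact: measurable_ler_set.
have niA : nonincreasing_seq A.
  by move=> m n mn; apply/subsetPset => t /= /le_trans; apply; rewrite lerN2 ler_nat.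
have -> : 0 = pr P (\bigcap_n A n).
  rewrite (_ : \bigcap_n A n = set0) ?/pr ?measure0//.
  apply/seteqP; split => t //= /(_ (Num.truncn `|Y t|).+1 I); rewrite /A/= lerNr.
  move=> /(lt_le_trans (archimedean.Num.Theory.truncnS_gt _)).
  by rewrite ltNge -normrN ler_norm.
by move=> /(pr_nonincreasing_lt mA niA)[n An]; exists (- n%:R).
Qed.

Lemma cdfRV_y v : v < 1 -> exists y, v < F y.
Proof.
pose A n := [set t | Y t <= n%:R].
have mA n : measurable (A n) by exact: measurable_ler_set.
have ndA : nondecreasing_seq A.
  by move=> m n mn; apply/subsetPset => t /= /le_trans; apply; rewrite ler_nat.
have -> : 1 = pr P (\bigcup_n A n).
  rewrite (_ : \bigcup_n A n = setT) ?pr_setT//.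
  apply/seteqP; split => t //= _; exists (Num.truncn `|Y t|).+1 => //.
  exact/ltW/(le_lt_trans (ler_norm _))/archimedean.Num.Theory.truncnS_gt.
by move=> /(pr_nondecreasing_gt mA ndA)[n An]; exists n%:R.
Qed.

Lemma leftlim_cdfRV y : leftlim F y = pr P [set t | Y t < y].
Proof.
apply: cvg_lim => //; apply/cvgrPdist_le => e e0.
have [x xy Fx] := cdfRV_left y e e0.
near=> z.
have xz : x < z by near: z; exact: nbhs_left_gt.
have zy : z < y by near: z; exact: nbhs_left_lt.
have Fz : F z <= pr P [set t | Y t < y].
  apply: le_pr; [exact: measurable_ler_set|exact: measurable_ltr_set|].
  by move=> t /= /le_lt_trans; apply.
have := cdfRV_nd _ _ (ltW xz); rewrite ler_norml; lra.
Unshelve. all: by end_near. Qed.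

Lemma leftlim_cdfRV_nd : nondecreasing_fun (leftlim F).
Proof.
move=> x y xy; rewrite !leftlim_cdfRV.
apply: le_pr; [exact: measurable_ltr_set|exact: measurable_ltr_set|].
by move=> t /= /lt_le_trans; apply.
Qed.

Lemma leftlim_cdfRV01 y : 0 <= leftlim F y <= 1.
Proof. by rewrite leftlim_cdfRV pr_ge0 pr_le1//; exact: measurable_ltr_set. Qed.

Lemma pr_ge_leftlim_cdfRV y : pr P [set t | y <= Y t] = 1 - leftlim F y.
Proof.
rewrite leftlim_cdfRV -pr_setC; last exact: measurable_ltr_set.
by congr (pr P _); apply/seteqP; split => t /=; rewrite leNgt => /negP.
Qed.

Lemma pr_gt_cdfRV y : pr P [set t | y < Y t] = 1 - F y.
Proof.
rewrite -pr_setC; last exact: measurable_ler_set.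
by congr (pr P _); apply/seteqP; split => t /=; rewrite ltNge => /negP.
Qed.

Lemma is_cdf_cdfRV : is_cdf F.
Proof. by split; [exact: cdfRV_nd|exact: cdfRV_right|exact: cdfRV_Ny|exact: cdfRV_y]. Qed.

Lemma qinv_cdfRV_le v y : 0 < v < 1 -> (qinv F v <= y) = (v <= F y).
Proof. exact: (qinv_le is_cdf_cdfRV). Qed.

Lemma qinv_cdfRV_lt v y : 0 < v < 1 -> v < leftlim F y -> qinv F v < y.
Proof.
move=> v01; rewrite leftlim_cdfRV => vy.
have [|x xy vx] := cdfRV_left y _ (_ : 0 < pr P [set t | Y t < y] - v); first lra.
by apply: le_lt_trans xy; rewrite qinv_cdfRV_le//; lra.
Qed.

Lemma le_rqinv_cdfRV v y : v < 1 -> leftlim F y <= v -> y <= rqinv F v.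
Proof.
move=> v1; rewrite leftlim_cdfRV => yv; apply: (le_rqinv is_cdf_cdfRV _ _ v1) => z zy.
apply: le_trans yv; apply: le_pr; [exact: measurable_ler_set|exact: measurable_ltr_set|].
by move=> t /= /le_lt_trans; apply.
Qed.

End cdfRV.

Section posp.
Context {R : realType}.
Implicit Types x y e : R.

Lemma posp_ge0 x : 0 <= posp x.
Proof. by rewrite /posp le_max lexx orbT. Qed.

Lemma le_posp x : x <= posp x.
Proof. by rewrite /posp le_max lexx. Qed.

Lemma posp_le x y : x <= y -> 0 <= y -> posp x <= y.
Proof. by move=> xy y0; rewrite /posp ge_max xy y0. Qed.

Lemma posp_nd : nondecreasing_fun (@posp R).
Proof. by move=> x y xy; rewrite /posp !maxEle; repeat case: ifPn; lra. Qed.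

Lemma posp_leD x y e : x <= y + e -> 0 <= e -> posp x <= posp y + e.
Proof. by move=> xy e0; rewrite /posp !maxEle; repeat case: ifPn; lra. Qed.

End posp.

Lemma image_itv_oo_neq0 {R : realType} (a b : R) (f : R -> R) : a < b ->
  [set f x | x in `]a, b[] !=set0.
Proof. by move=> ab; exists (f ((a + b) / 2)), ((a + b) / 2); rewrite //= in_itv/= !midf_lt. Qed.

Section monotone_lipschitz.
Context {R : realType}.

Definition monotone_1lipschitz_ab (f : R -> R -> R) : Prop :=
  (forall a a' b, 0 <= a -> a <= a' -> a' < b -> b <= 1 ->
     f a' b <= f a b <= f a' b + (a' - a)) /\
  (forall a b b', 0 <= a -> a < b -> b <= b' -> b' <= 1 ->
     f a b <= f a b' <= f a b + (b' - b)).

Lemma monotone_1lipschitz_ab_compl f : monotone_1lipschitz_ab f ->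
  monotone_1lipschitz_ab (fun a b => b - a - f a b).
Proof.
move=> [fa fb]; split => [a a' b a0 aa ab b1|a b b' a0 ab bb b1].
  by have /andP[] := fa a a' b a0 aa ab b1 => h1 h2; apply/andP; split; lra.
by have /andP[] := fb a b b' a0 ab bb b1 => h1 h2; apply/andP; split; lra.
Qed.

Lemma monotone_1lipschitz_abW f : monotone_1lipschitz_ab f -> monotone_lipschitz_ab f.
Proof.
move=> [fa fb]; split.
- by move=> a a' b a0 aa ab b1; have /andP[] := fa a a' b a0 aa ab b1.
- exists 1 => a a' b a0 a'0 ab a'b b1; rewrite mul1r.
  have [aa|aa] := leP a a'.
    have /andP[h1 h2] := fa a a' b a0 aa a'b b1.
    by rewrite (ger0_norm (_ : 0 <= f a b - f a' b)) ?(ler0_norm (_ : a - a' <= 0)); lra.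
  have /andP[h1 h2] := fa a' a b a'0 (ltW aa) ab b1.
  by rewrite (ler0_norm (_ : f a b - f a' b <= 0)) ?(ger0_norm (_ : 0 <= a - a')); lra.
- by move=> a b b' a0 ab bb b1; have /andP[] := fb a b b' a0 ab bb b1.
- exists 1 => a b b' a0 ab ab' b1 b'1; rewrite mul1r.
  have [bb|bb] := leP b b'.
    have /andP[h1 h2] := fb a b b' a0 ab bb b'1.
    by rewrite (ler0_norm (_ : f a b - f a b' <= 0)) ?(ler0_norm (_ : b - b' <= 0)); lra.
  have /andP[h1 h2] := fb a b' b a0 ab' (ltW bb) b1.
  by rewrite (ger0_norm (_ : 0 <= f a b - f a b')) ?(ger0_norm (_ : 0 <= b - b')); lra.
Qed.

End monotone_lipschitz.

Section sup_image_itv.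
Context {R : realType} (g : R -> R) (a b : R).

Lemma sup_image_itv_le c : a < b -> (forall x, a < x < b -> g x <= c) ->
  sup [set g x | x in `]a, b[] <= c.
Proof.
move=> ab gc; apply: ge_sup; first exact: image_itv_oo_neq0.
by move=> y [x]; rewrite /= in_itv/= => /gc gxc <-.
Qed.

Lemma le_sup_image_itv x : has_ubound [set g x | x in `]a, b[] -> a < x < b ->
  g x <= sup [set g x | x in `]a, b[].
Proof. by move=> ub xab; apply: ub_le_sup => //; exists x => //; rewrite /= in_itv. Qed.

End sup_image_itv.

(* With [h := F1 \o Q0], [excessL h] is the lower bound on P(Y0 < Y1) and
   [b - a - excessR h] the upper one; with [h := F1(Q0 -)] the roles of
   [excessL] and [excessR] are exchanged for P(Y0 > Y1). *)
Definition excessL {R : realType} (h : R -> R) (a b : R) : R :=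
  sup [set posp (x - a - h x) | x in `]a, b[].
Definition excessR {R : realType} (h : R -> R) (a b : R) : R :=
  sup [set posp (b - x - 1 + h x) | x in `]a, b[].

Section excess.
Context {R : realType} (h : R -> R).
Hypothesis h_nd : forall x y : R, 0 < x -> x <= y -> y < 1 -> h x <= h y.
Hypothesis h01 : forall x, 0 <= h x <= 1.
Implicit Types a b x y : R.

Lemma le_excessL {a b x} : a < x < b -> posp (x - a - h x) <= excessL h a b.
Proof.
apply: le_sup_image_itv; exists (Num.max (b - a) 0) => z [y /=].
rewrite in_itv/= => /andP[ay yb] <-; have := h01 y.
by rewrite /posp !maxEle; repeat case: ifPn; lra.
Qed.

Lemma le_excessR {a b x} : a < x < b -> posp (b - x - 1 + h x) <= excessR h a b.
Proof.
apply: le_sup_image_itv; exists (Num.max (b - a) 0) => z [y /=].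
rewrite in_itv/= => /andP[ay yb] <-; have := h01 y.
by rewrite /posp !maxEle; repeat case: ifPn; lra.
Qed.

Lemma excessL_ge0 {a b} : a < b -> 0 <= excessL h a b.
Proof.
by move=> ab; apply: le_trans (posp_ge0 _) (le_excessL (x := (a + b) / 2) _); rewrite !midf_lt.
Qed.

Lemma excessR_ge0 {a b} : a < b -> 0 <= excessR h a b.
Proof.
by move=> ab; apply: le_trans (posp_ge0 _) (le_excessR (x := (a + b) / 2) _); rewrite !midf_lt.
Qed.

Lemma excessL_le {a b} : a < b -> excessL h a b <= b - a.
Proof.
move=> ab; apply: sup_image_itv_le => // x /andP[ax xb].
by apply: posp_le; have := h01 x; lra.
Qed.

Lemma excessR_le {a b} : a < b -> excessR h a b <= b - a.
Proof.
move=> ab; apply: sup_image_itv_le => // x /andP[ax xb].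
by apply: posp_le; have := h01 x; lra.
Qed.

Lemma excessL_shift_a a a' b : a <= a' -> a' < b ->
  excessL h a' b <= excessL h a b <= excessL h a' b + (a' - a).
Proof.
move=> aa ab; apply/andP; split.
  apply: sup_image_itv_le => // x /andP[ax xb].
  have : posp (x - a - h x) <= excessL h a b by apply: le_excessL; apply/andP; lra.
  by apply: le_trans; apply: posp_nd; lra.
apply: sup_image_itv_le => [|x /andP[ax xb]]; first lra.
have [a'x|xa'] := ltP a' x.
  have : posp (x - a' - h x) <= excessL h a' b by apply: le_excessL; apply/andP.
  have : posp (x - a - h x) <= posp (x - a' - h x) + (a' - a) by apply: posp_leD; lra.
  lra.
have : posp (x - a - h x) <= a' - a by apply: posp_le; have := h01 x; lra.
have := excessL_ge0 ab; lra.
Qed.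

Lemma excessL_shift_b a b b' : 0 <= a -> a < b -> b <= b' -> b' <= 1 ->
  excessL h a b <= excessL h a b' <= excessL h a b + (b' - b).
Proof.
move=> a0 ab bb b1; apply/andP; split.
  by apply: sup_image_itv_le => // x /andP[ax xb]; apply: le_excessL; apply/andP; lra.
apply: sup_image_itv_le => [|x /andP[ax xb]]; first lra.
have [xb'|bx] := ltP x b.
  have : posp (x - a - h x) <= excessL h a b by apply: le_excessL; apply/andP.
  lra.
apply/ler_addgt0Pr => e e0.
have [y [ay yb ye]] : exists y, [/\ a < y, y < b & b - e <= y].
  exists (Num.max ((a + b) / 2) (b - e)); have [m1 m2] := midf_lt ab.
  by rewrite !maxEle; case: ifPn => ?; split; lra.
have : posp (y - a - h y) <= excessL h a b by apply: le_excessL; apply/andP.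
have hyx : h y <= h x by apply: h_nd; lra.
have : posp (x - a - h x) <= posp (y - a - h y) + (x - y) by apply: posp_leD; lra.
lra.
Qed.

Lemma excessR_shift_a a a' b : 0 <= a -> a <= a' -> a' < b -> b <= 1 ->
  excessR h a' b <= excessR h a b <= excessR h a' b + (a' - a).
Proof.
move=> a0 aa ab b1; apply/andP; split.
  by apply: sup_image_itv_le => // x /andP[ax xb]; apply: le_excessR; apply/andP; lra.
apply: sup_image_itv_le => [|x /andP[ax xb]]; first lra.
have [a'x|xa'] := ltP a' x.
  have : posp (b - x - 1 + h x) <= excessR h a' b by apply: le_excessR; apply/andP.
  lra.
apply/ler_addgt0Pr => e e0.
have [y [ay yb ye]] : exists y, [/\ a' < y, y < b & y <= a' + e].
  exists (Num.min ((a' + b) / 2) (a' + e)); have [m1 m2] := midf_lt ab.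
  by rewrite !minEle; case: ifPn => ?; split; lra.
have : posp (b - y - 1 + h y) <= excessR h a' b by apply: le_excessR; apply/andP.
have hxy : h x <= h y by apply: h_nd; lra.
have : posp (b - x - 1 + h x) <= posp (b - y - 1 + h y) + (y - x) by apply: posp_leD; lra.
lra.
Qed.

Lemma excessR_shift_b a b b' : a < b -> b <= b' ->
  excessR h a b <= excessR h a b' <= excessR h a b + (b' - b).
Proof.
move=> ab bb; apply/andP; split.
  apply: sup_image_itv_le => // x /andP[ax xb].
  have : posp (b' - x - 1 + h x) <= excessR h a b' by apply: le_excessR; apply/andP; lra.
  by apply: le_trans; apply: posp_nd; lra.
apply: sup_image_itv_le => [|x /andP[ax xb]]; first lra.
have [xb'|bx] := ltP x b.
  have : posp (b - x - 1 + h x) <= excessR h a b by apply: le_excessR; apply/andP.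
  have : posp (b' - x - 1 + h x) <= posp (b - x - 1 + h x) + (b' - b) by apply: posp_leD; lra.
  lra.
have : posp (b' - x - 1 + h x) <= b' - b by apply: posp_le; have := h01 x; lra.
have := excessR_ge0 ab; lra.
Qed.

Lemma excessL_monotone_1lipschitz : monotone_1lipschitz_ab (excessL h).
Proof.
split=> [a a' b _ aa ab _|a b b' a0 ab bb b1]; first exact: excessL_shift_a.
exact: excessL_shift_b.
Qed.

Lemma excessR_monotone_1lipschitz : monotone_1lipschitz_ab (excessR h).
Proof.
split=> [a a' b a0 aa ab b1|a b b' _ ab bb _]; first exact: excessR_shift_a.
exact: excessR_shift_b.
Qed.

End excess.

Section bounds.
Context {d} {T : measurableType d} {R : realType} (P : probability T R).
Variables (U Y : T -> R) (Q : R -> R).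
Hypotheses (mU : measurable_fun setT U) (hU : uniform01 P U) (mY : measurable_fun setT Y).
Hypothesis mQU : measurable_fun setT (Q \o U).
(* only on (0,1): the intended [Q] is a quantile function, whose values outside
   (0,1) are junk ([inf] of an unbounded or empty set) *)
Hypothesis Q_nd : forall u v, 0 < u -> u <= v -> v < 1 -> Q u <= Q v.
Variables (a b : R).
Local Notation F := (cdfRV P Y).

Definition event_lt := [set t | a < U t < b /\ Q (U t) < Y t].
Definition event_gt := [set t | a < U t < b /\ Y t < Q (U t)].

Lemma measurable_event_lt : measurable event_lt.
Proof. by apply: measurableI; [exact: measurable_oo_set|exact: measurable_ltr_set]. Qed.

Lemma measurable_event_gt : measurable event_gt.
Proof. by apply: measurableI; [exact: measurable_oo_set|exact: measurable_ltr_set]. Qed.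

Let pr_oo x y : 0 <= x -> x <= y -> y <= 1 -> pr P [set t | x < U t < y] = y - x.
Proof. exact: (pr_uniform_oo mU hU). Qed.

Lemma excessL_le_pr_event_lt : 0 <= a -> a < b -> b <= 1 ->
  excessL (F \o Q) a b <= pr P event_lt.
Proof.
move=> a0 ab b1; apply: sup_image_itv_le => // x /andP[ax xb].
apply: posp_le; last exact: pr_ge0.
have := pr_subsetU (P := P) (measurable_oo_set a x mU) measurable_event_lt
  (measurable_ler_set (f := Y) (g := fun=> Q x) mY (measurable_cst _)).
rewrite pr_oo; [apply => t /= /andP[aUt Utx]|lra..].
have [QY|YQ] := ltP (Q (U t)) (Y t); first by left; split => //; apply/andP; lra.
by right; apply: le_trans YQ _; apply: Q_nd; lra.
Qed.

Lemma pr_event_lt_le : 0 <= a -> a < b -> b <= 1 ->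
  pr P event_lt <= b - a - excessR (F \o Q) a b.
Proof.
move=> a0 ab b1.
have Eab : pr P event_lt <= b - a.
  rewrite -pr_oo; [|lra..].
  by apply: le_pr; [exact: measurable_event_lt|exact: measurable_oo_set|move=> t []].
rewrite lerBrDl addrC -lerBrDl; apply: sup_image_itv_le => // x /andP[ax xb].
apply: posp_le; last lra.
(* [D] and the event are disjoint parts of {a < U < b}, and [D] has mass at
   least b - x - (1 - F (Q x)). *)
pose D := [set t | x < U t < b /\ Y t <= Q x].
have mD : measurable D.
  by apply: measurableI; [exact: measurable_oo_set|exact: measurable_ler_set].
have ED : pr P event_lt + pr P D <= b - a.
  rewrite -pr_oo; [|lra..].
  apply: (pr_disjointU_le (P := P)) measurable_event_lt mD (measurable_oo_set _ _ mU) _ _.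
    apply/seteqP; split => t //= [[/andP[_ ut] QY] [/andP[xu _] YQ]].
    have : Q x <= Q (U t) by apply: Q_nd; lra.
    lra.
  by move=> t /= [[]|[/andP[? ?] _]] //; apply/andP; lra.
have := pr_subsetU (P := P) (measurable_oo_set x b mU) mD
  (measurable_ltr_set (f := fun=> Q x) (measurable_cst _) mY).
rewrite pr_oo ?(pr_gt_cdfRV P Y mY); [|lra..].
have : [set t | x < U t < b] `<=` D `|` [set t | Q x < Y t].
  by move=> t /= h; case: (ltP (Q x) (Y t)) => h'; [right|left].
by move=> /[swap] /[apply]; change ((F \o Q) x) with (F (Q x)); lra.
Qed.

Lemma excessR_le_pr_event_gt : 0 <= a -> a < b -> b <= 1 ->
  excessR (leftlim F \o Q) a b <= pr P event_gt.
Proof.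
move=> a0 ab b1; apply: sup_image_itv_le => // x /andP[ax xb].
apply: posp_le; last exact: pr_ge0.
have := pr_subsetU (P := P) (measurable_oo_set x b mU) measurable_event_gt
  (measurable_ler_set (f := fun=> Q x) (measurable_cst _) mY).
rewrite pr_oo ?(pr_ge_leftlim_cdfRV P Y mY); [|lra..].
have : [set t | x < U t < b] `<=` event_gt `|` [set t | Q x <= Y t].
  move=> t /= /andP[xUt Utb].
  have [YQ|QY] := ltP (Y t) (Q (U t)); first by left; split => //; apply/andP; lra.
  by right; apply: le_trans QY; apply: Q_nd; lra.
by move=> /[swap] /[apply]; change ((leftlim F \o Q) x) with (leftlim F (Q x)); lra.
Qed.

Lemma pr_event_gt_le : 0 <= a -> a < b -> b <= 1 ->
  pr P event_gt <= b - a - excessL (leftlim F \o Q) a b.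
Proof.
move=> a0 ab b1.
have Eab : pr P event_gt <= b - a.
  rewrite -pr_oo; [|lra..].
  by apply: le_pr; [exact: measurable_event_gt|exact: measurable_oo_set|move=> t []].
rewrite lerBrDl addrC -lerBrDl; apply: sup_image_itv_le => // x /andP[ax xb].
apply: posp_le; last lra.
pose D := [set t | a < U t < x /\ Q x <= Y t].
have mD : measurable D.
  by apply: measurableI; [exact: measurable_oo_set|exact: measurable_ler_set].
have ED : pr P event_gt + pr P D <= b - a.
  rewrite -pr_oo; [|lra..].
  apply: (pr_disjointU_le (P := P)) measurable_event_gt mD (measurable_oo_set _ _ mU) _ _.
    apply/seteqP; split => t //= [[/andP[aUt _] YQ] [/andP[_ ux] QY]].
    have : Q (U t) <= Q x by apply: Q_nd; lra.
    lra.
  by move=> t /= [[]|[/andP[? ?] _]] //; apply/andP; lra.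
have := pr_subsetU (P := P) (measurable_oo_set a x mU) mD
  (measurable_ltr_set (f := Y) (g := fun=> Q x) mY (measurable_cst _)).
rewrite pr_oo -?(leftlim_cdfRV P Y mY); [|lra..].
have : [set t | a < U t < x] `<=` D `|` [set t | Y t < Q x].
  by move=> t /= h; case: (ltP (Y t) (Q x)) => h'; [right|left].
by move=> /[swap] /[apply]; change ((leftlim F \o Q) x) with (leftlim F (Q x)); lra.
Qed.

End bounds.

Lemma measurable_fun_nd_itv01 {R : realType} (f : R -> R) :
  (forall u v, 0 < u -> u <= v -> v < 1 -> f u <= f v) ->
  measurable_fun (`]0, 1[%classic : set R) f.
Proof.
move=> f_nd; apply: (measurability (@RGenCInfty.G R)) => [|/= _ [_] [r] -> <-].
  exact: RGenCInfty.measurableE.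
apply: is_interval_measurable => s t /= [s01 fs] [t01 ft] u /andP[su ut].
rewrite !in_itv/= !andbT in s01 t01 fs ft *.
case/andP: s01 => s0 _; case/andP: t01 => _ t1.
split; first by apply/andP; lra.
by apply: le_trans fs _; apply: f_nd; lra.
Qed.

(* [rot01 c] is translation by [- c] modulo 1 on (0,1); [retract01] replaces the
   values outside (0,1), taken on a null set only, by 1/2. *)
Definition rot01 {R : realType} (c u : R) : R := if u < c then u - c + 1 else u - c.

Definition retract01 {R : realType} (v : R) : R := if 0 < v < 1 then v else 2^-1.

Section rotation_maps.
Context {R : realType}.
Implicit Types c u v : R.

Lemma retract01_in01 v : 0 < retract01 v < 1.
Proof.
rewrite /retract01; case: ifPn => // _.
by rewrite invr_gt0 ltr0n /= invf_lt1 ?ltr1n.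
Qed.

Lemma retract01_id v : 0 < v < 1 -> retract01 v = v.
Proof. by rewrite /retract01 => ->. Qed.

Lemma rot01_in01 c u : 0 <= c <= 1 -> 0 < u < 1 -> u != c -> 0 < rot01 c u < 1.
Proof.
move=> /andP[c0 c1] /andP[u0 u1] uc; rewrite /rot01; case: ifPn => [|/negbTE].
  by move=> ?; apply/andP; lra.
by rewrite ltNge => /negbFE; rewrite le_eqVlt eq_sym (negbTE uc) /= => ?; apply/andP; lra.
Qed.

Lemma measurable_rot01 c : measurable_fun setT (rot01 c).
Proof.
apply: measurable_fun_ifT; first exact: measurable_fun_ltr.
  by apply: measurable_funD => //; exact: measurable_funB.
exact: measurable_funB.
Qed.

Lemma measurable_retract01 : measurable_fun setT (@retract01 R).
Proof.
apply: measurable_fun_ifT => //.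
by apply: measurable_and; exact: measurable_fun_ltr.
Qed.

End rotation_maps.

Section rotation.
Context {d} {T : measurableType d} {R : realType} {P : probability T R} {U : T -> R}.
Hypotheses (mU : measurable_fun setT U) (hU : uniform01 P U).
Local Notation N := (uniform_null (U := U)).
Implicit Types c w : R.

Definition rotU c t := retract01 (rot01 c (U t)).

Lemma measurable_rotU c : measurable_fun setT (rotU c).
Proof. exact: measurableT_comp measurable_retract01 (measurableT_comp (measurable_rot01 c) mU). Qed.

Lemma rotU_in01 c t : 0 < rotU c t < 1.
Proof. exact: retract01_in01. Qed.

Lemma rotU_E c t : 0 <= c <= 1 -> ~ N c t -> rotU c t = rot01 c (U t).
Proof.
move=> c01 /not_uniform_null[U01 Uc]; rewrite /rotU retract01_id//.
exact: rot01_in01.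
Qed.

Lemma uniform_rotU c : 0 <= c <= 1 -> uniform01 P (rotU c).
Proof.
move=> c01 w; have /andP[c0 c1] := c01; rewrite -/(clamp01 w).
have [w0|w0] := ltP w 0.
  rewrite clamp01_le0 ?(ltW w0)// (_ : [set t | _] = set0) ?measure0//.
  by apply/seteqP; split => t //= ?; have := rotU_in01 c t; lra.
have [w1|w1] := ltP 1 w.
  rewrite clamp01_ge1 ?(ltW w1)// (_ : [set t | _] = setT) ?probability_setT//.
  by apply/seteqP; split => t //= _; have := rotU_in01 c t; lra.
pose A := [set t | U t <= w + c - 1] `|` [set t | c < U t <= w + c].
have mA : measurable A by apply: measurableU; [exact: measurable_ler_set|exact: measurable_oc_set].
rewrite prE; last by apply: measurable_ler_set => //; exact: measurable_rotU.
congr (_%:E).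
rewrite (pr_eq_outside_null _ mA (measurable_uniform_null mU c) (pr_uniform_null mU hU c)).
- rewrite pr_setU; [|exact: measurable_ler_set|exact: measurable_oc_set|]; last first.
    by apply/seteqP; split => t //= [? /andP[? _]]; lra.
  rewrite (pr_uniform_le hU) (pr_uniform_oc mU hU); last lra.
  rewrite [clamp01 c]clamp01_id// [clamp01 w]clamp01_id; last by apply/andP.
  have [wc|wc] := leP (w + c) 1.
    by rewrite [clamp01 (w + c)]clamp01_id ?clamp01_le0; [lra|lra|apply/andP; lra].
  by rewrite [clamp01 (w + c)]clamp01_ge1 ?clamp01_id; [lra|apply/andP; lra|lra].
- by apply: measurable_ler_set => //; exact: measurable_rotU.
- move=> t [/= + Nt]; have [/andP[U0 U1] Uc] := not_uniform_null _ _ Nt.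
  rewrite rotU_E// /rot01; case: ifPn => Utc h; first by left => /=; lra.
  by right => /=; rewrite -leNgt le_eqVlt eq_sym (negbTE Uc) in Utc; apply/andP; lra.
- move=> t [At Nt]; have [/andP[U0 U1] Uc] := not_uniform_null _ _ Nt.
  rewrite /= rotU_E// /rot01; case: ifPn => Utc; case: At => /= [|/andP[]]; lra.
Qed.

End rotation.

Section inverse_transform.
Context {d} {T : measurableType d} {R : realType} (P : probability T R).
Variables (V Y : T -> R).
Hypotheses (mV : measurable_fun setT V) (hV : uniform01 P V) (V01 : forall t, 0 < V t < 1).
Hypothesis mY : measurable_fun setT Y.
Local Notation F := (cdfRV P Y).

Let measurable_comp01 (f : R -> R) :
  (forall u v, 0 < u -> u <= v -> v < 1 -> f u <= f v) -> measurable_fun setT (f \o V).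
Proof.
move=> f_nd; apply: (measurable_comp (F := (`]0, 1[%classic : set R))) => //.
- by move=> _ [t _ <-]; rewrite /= in_itv/=.
- exact: measurable_fun_nd_itv01.
Qed.

Lemma measurable_qinv_comp : measurable_fun setT (qinv F \o V).
Proof.
by apply: measurable_comp01; exact: (qinv_nd (is_cdf_cdfRV P Y mY)).
Qed.

Lemma measurable_rqinv_comp : measurable_fun setT (rqinv F \o V).
Proof.
by apply: measurable_comp01; exact: (rqinv_nd (is_cdf_cdfRV P Y mY)).
Qed.

Lemma cdfRV_qinv_comp : cdfRV P (qinv F \o V) =1 F.
Proof.
move=> y; rewrite /cdfRV -/(pr P _) (_ : [set t | _] = [set t | V t <= F y]).
  by rewrite (pr_uniform_le hV) clamp01_id// cdfRV_ge0 (cdfRV_le1 P Y mY).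
by apply/seteqP; split => t /=; rewrite (qinv_cdfRV_le P Y mY).
Qed.

Lemma cdfRV_rqinv_comp : cdfRV P (rqinv F \o V) =1 F.
Proof.
move=> y; rewrite /cdfRV -/(pr P _).
have F01 : 0 <= F y <= 1 by rewrite cdfRV_ge0 (cdfRV_le1 P Y mY).
have mVF : measurable [set t | rqinv F (V t) <= y].
  by apply: measurable_ler_set => //; exact: measurable_rqinv_comp.
apply/eqP; rewrite eq_le; apply/andP; split.
  rewrite -[leRHS](clamp01_id _ F01) -(pr_uniform_le hV).
  apply: le_pr => //; first exact: measurable_ler_set.
  by move=> t /=; apply: (le_of_rqinv_le (is_cdf_cdfRV P Y mY)).
rewrite -[leLHS](clamp01_id _ F01) -(pr_uniform_lt mV hV).
apply: le_pr => //; first exact: measurable_ltr_set.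
by move=> t /=; apply: (rqinv_le (is_cdf_cdfRV P Y mY)); case/andP: (V01 t).
Qed.

End inverse_transform.

Lemma exists_coupling_law {d} {T : measurableType d} {R : realType}
    {P : probability T R} {U Y : T -> R} {F : R -> R} :
  measurable_fun setT U -> uniform01 P U -> measurable_fun setT Y -> cdfRV P Y =1 F ->
  exists mu : probability (R * R)%type R,
    coupling_law F mu /\ forall A, mu A = P [set t | A (U t, Y t)].
Proof.
move=> mU hU mY YF.
have mUY : measurable_fun setT (fun t => (U t, Y t)) := measurable_fun_pair mU mY.
exists (distribution P (mfun_Sub (mem_set mUY))); split => //; split => x; first exact: hU.
by rewrite /distribution /pushforward /= -YF -prE//; exact: measurable_ler_set.
Qed.

Section rotated_couplings.
Context {d} {T : measurableType d} {R : realType} (P : probability T R).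
Variables (U Y : T -> R) (Q : R -> R).
Hypotheses (mU : measurable_fun setT U) (hU : uniform01 P U) (mY : measurable_fun setT Y).
Hypothesis mQU : measurable_fun setT (Q \o U).
Variables (a b c : R).
Local Notation F := (cdfRV P Y).
Local Notation N := (uniform_null (U := U)).
Local Notation V := (rotU (U := U) c).

Let measurable_N : measurable (N c). Proof. exact: measurable_uniform_null. Qed.

Let pr_N : pr P (N c) = 0. Proof. exact: pr_uniform_null. Qed.

Let pr_le_null A B : measurable A -> measurable B -> A `<=` B `|` N c -> pr P A <= pr P B.
Proof.
by move=> mA mB AB; have := pr_subsetU (P := P) mA mB measurable_N AB; rewrite pr_N subr0.
Qed.

Let pr_oo x y : 0 <= x -> x <= y -> y <= 1 -> pr P [set t | x < U t < y] = y - x.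
Proof. exact: (pr_uniform_oo mU hU). Qed.

Let mYrot : measurable_fun setT (qinv F \o V).
Proof. exact: measurable_qinv_comp (measurable_rotU mU c) (rotU_in01 c) mY. Qed.

Let mYrrot : measurable_fun setT (rqinv F \o V).
Proof. exact: measurable_rqinv_comp (measurable_rotU mU c) (rotU_in01 c) mY. Qed.

Let V_below {t} : 0 <= c <= 1 -> ~ N c t -> U t < c -> V t = U t - c + 1.
Proof. by move=> c01 Nt Uc; rewrite rotU_E// /rot01 ifT. Qed.

Let V_above {t} : 0 <= c <= 1 -> ~ N c t -> c < U t -> V t = U t - c.
Proof. by move=> c01 Nt cU; rewrite rotU_E// /rot01 ifN// -leNgt ltW. Qed.

Let N_split {t} : ~ N c t -> U t < c \/ c < U t.
Proof. by move=> /not_uniform_null[_]; rewrite neq_lt => /orP. Qed.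

Lemma pr_event_lt_rot_le : 0 <= a -> a <= c -> c <= 1 ->
  (forall x, c < x < b -> x - c <= F (Q x)) ->
  pr P (event_lt U (qinv F \o V) Q a b) <= c - a.
Proof.
move=> a0 ac c1 hc; have c01 : 0 <= c <= 1 by apply/andP; lra.
rewrite -pr_oo//; apply: pr_le_null; [exact: measurable_event_lt|exact: measurable_oo_set|].
move=> t [/andP[aU Ub] QY]; have [Nt|Nt] := pselect (N c t); [by right|left].
have [Uc|cU] := N_split Nt; first by apply/andP.
move: QY; rewrite /= ltNge (qinv_cdfRV_le P Y mY) ?rotU_in01// (V_above c01 Nt cU).
by rewrite hc//; apply/andP.
Qed.

Lemma pr_event_gt_rrot_le : 0 <= c -> c <= b -> b <= 1 ->
  (forall x, a < x < c -> leftlim F (Q x) <= x - c + 1) ->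
  pr P (event_gt U (rqinv F \o V) Q a b) <= b - c.
Proof.
move=> c0 cb b1 hc; have c01 : 0 <= c <= 1 by apply/andP; lra.
rewrite -pr_oo//; apply: pr_le_null; [exact: measurable_event_gt|exact: measurable_oo_set|].
move=> t [/andP[aU Ub] YQ]; have [Nt|Nt] := pselect (N c t); [by right|left].
have [Uc|cU] := N_split Nt; last by apply/andP.
case/andP: (rotU_in01 (U := U) c t) => _ V1.
exfalso; move: YQ; rewrite /= ltNge => /negP; apply.
apply: (le_rqinv_cdfRV P Y mY) => //.
by rewrite (V_below c01 Nt Uc) hc//; apply/andP.
Qed.

Lemma le_pr_event_lt_rot : 0 <= a -> a <= c -> c <= b -> b <= 1 ->
  (forall x, a < x < c -> F (Q x) < x - c + 1) ->
  c - a <= pr P (event_lt U (qinv F \o V) Q a b).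
Proof.
move=> a0 ac cb b1 hc; have c01 : 0 <= c <= 1 by apply/andP; lra.
rewrite -pr_oo; [|lra..].
apply: pr_le_null; [exact: measurable_oo_set|exact: measurable_event_lt|].
move=> t /andP[aU Uc]; have [Nt|Nt] := pselect (N c t); [by right|left].
split; first by apply/andP; lra.
rewrite /= ltNge (qinv_cdfRV_le P Y mY) ?rotU_in01// (V_below c01 Nt Uc) -ltNge.
by rewrite hc//; apply/andP.
Qed.

Lemma le_pr_event_gt_rot : 0 <= a -> a <= c -> c <= b -> b <= 1 ->
  (forall x, c < x < b -> x - c < leftlim F (Q x)) ->
  b - c <= pr P (event_gt U (qinv F \o V) Q a b).
Proof.
move=> a0 ac cb b1 hc; have c01 : 0 <= c <= 1 by apply/andP; lra.
rewrite -pr_oo; [|lra..].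
apply: pr_le_null; [exact: measurable_oo_set|exact: measurable_event_gt|].
move=> t /andP[cU Ub]; have [Nt|Nt] := pselect (N c t); [by right|left].
split; first by apply/andP; lra.
apply: (qinv_cdfRV_lt P Y mY); first exact: rotU_in01.
by rewrite (V_above c01 Nt cU) hc//; apply/andP.
Qed.

End rotated_couplings.

Section theorem_A4.
Context {d : measure_display} {T : measurableType d} {R : realType} (P : probability T R).
Variables (U Y0 Y1 : T -> R).
Hypotheses (mU : measurable_fun setT U) (mY0 : measurable_fun setT Y0)
  (mY1 : measurable_fun setT Y1) (hU : uniform01 P U).
Hypothesis hY0 : forall t, Y0 t = qinv (cdfRV P Y0) (U t).
Local Notation F0 := (cdfRV P Y0).
Local Notation F1 := (cdfRV P Y1).
Local Notation Q0 := (qinv F0).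

Let Q0_nd u v : 0 < u -> u <= v -> v < 1 -> Q0 u <= Q0 v.
Proof. exact: (qinv_nd (is_cdf_cdfRV P Y0 mY0)). Qed.

Let mQ0U : measurable_fun setT (Q0 \o U).
Proof. by rewrite (_ : Q0 \o U = Y0)//; apply/funext => t; rewrite hY0. Qed.

Let F1Q0_nd u v : 0 < u -> u <= v -> v < 1 -> F1 (Q0 u) <= F1 (Q0 v).
Proof. by move=> u0 uv v1; apply: (cdfRV_nd P Y1 mY1); exact: Q0_nd. Qed.

Let F1Q0_01 x : 0 <= (F1 \o Q0) x <= 1.
Proof. by rewrite cdfRV_ge0 (cdfRV_le1 P Y1 mY1). Qed.

Let F1Q0l_nd u v : 0 < u -> u <= v -> v < 1 -> leftlim F1 (Q0 u) <= leftlim F1 (Q0 v).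
Proof. by move=> u0 uv v1; apply: (leftlim_cdfRV_nd P Y1 mY1); exact: Q0_nd. Qed.

Let F1Q0l_01 x : 0 <= (leftlim F1 \o Q0) x <= 1.
Proof. exact: (leftlim_cdfRV01 P Y1 mY1). Qed.

Let event_ltE a b : [set t | a < U t < b /\ Y0 t < Y1 t] = event_lt U Y1 Q0 a b.
Proof. by apply/seteqP; split => t; rewrite /event_lt /= -hY0. Qed.

Let event_gtE a b : [set t | a < U t < b /\ Y0 t > Y1 t] = event_gt U Y1 Q0 a b.
Proof. by apply/seteqP; split => t; rewrite /event_gt /= -hY0. Qed.

Lemma bounds_event_lt a b : 0 <= a -> a < b -> b <= 1 ->
  ((low_lt F0 F1 a b)%:E <= P [set t | (a < U t < b)%R /\ (Y0 t < Y1 t)%R]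
    <= (upp_lt F0 F1 a b)%:E)%E.
Proof.
move=> a0 ab b1; rewrite event_ltE prE; last exact: measurable_event_lt.
rewrite !lee_fin (excessL_le_pr_event_lt P U Y1 Q0)//.
exact: (pr_event_lt_le P U Y1 Q0).
Qed.

Lemma bounds_event_gt a b : 0 <= a -> a < b -> b <= 1 ->
  ((low_gt F0 F1 a b)%:E <= P [set t | (a < U t < b)%R /\ (Y0 t > Y1 t)%R]
    <= (upp_gt F0 F1 a b)%:E)%E.
Proof.
move=> a0 ab b1; rewrite event_gtE prE; last exact: measurable_event_gt.
rewrite !lee_fin (excessR_le_pr_event_gt P U Y1 Q0)//.
exact: (pr_event_gt_le P U Y1 Q0).
Qed.

Let low_lt_ge {a b x} : a < x < b -> x - a - F1 (Q0 x) <= low_lt F0 F1 a b.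
Proof. by move=> xab; apply: le_trans (le_posp _) (le_excessL _ F1Q0_01 xab). Qed.

Let low_gt_ge {a b x} : a < x < b -> b - x - 1 + leftlim F1 (Q0 x) <= low_gt F0 F1 a b.
Proof. by move=> xab; apply: le_trans (le_posp _) (le_excessR _ F1Q0l_01 xab). Qed.

Let upp_lt_le {a b x} : a < x < b -> b - x - 1 + F1 (Q0 x) <= b - a - upp_lt F0 F1 a b.
Proof.
rewrite (_ : b - a - _ = excessR (F1 \o Q0) a b); last by rewrite /upp_lt opprB addrC subrK.
by move=> xab; apply: le_trans (le_posp _) (le_excessR _ F1Q0_01 xab).
Qed.

Let upp_gt_le {a b x} : a < x < b -> x - a - leftlim F1 (Q0 x) <= b - a - upp_gt F0 F1 a b.
Proof.
rewrite (_ : b - a - _ = excessL (leftlim F1 \o Q0) a b); last by rewrite /upp_gt opprB addrC subrK.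
by move=> xab; apply: le_trans (le_posp _) (le_excessL _ F1Q0l_01 xab).
Qed.

Let mYrot c : measurable_fun setT (qinv F1 \o rotU (U := U) c).
Proof. exact: measurable_qinv_comp (measurable_rotU mU c) (rotU_in01 c) mY1. Qed.

Let mYrrot c : measurable_fun setT (rqinv F1 \o rotU (U := U) c).
Proof. exact: measurable_rqinv_comp (measurable_rotU mU c) (rotU_in01 c) mY1. Qed.

Let cdf_Yrot {c} : 0 <= c <= 1 -> cdfRV P (qinv F1 \o rotU (U := U) c) = F1.
Proof.
by move=> c01; apply/funext; exact: cdfRV_qinv_comp (uniform_rotU mU hU c c01) (rotU_in01 c) mY1.
Qed.

Let cdf_Yrrot {c} : 0 <= c <= 1 -> cdfRV P (rqinv F1 \o rotU (U := U) c) = F1.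
Proof.
move=> c01; apply/funext.
exact: cdfRV_rqinv_comp (measurable_rotU mU c) (uniform_rotU mU hU c c01) (rotU_in01 c) mY1.
Qed.

Let coupling_event_lt a b {Y} : measurable_fun setT Y -> cdfRV P Y = F1 ->
  exists mu : probability (R * R)%type R, coupling_law F1 mu /\
    mu [set p | a < p.1 < b /\ Q0 p.1 < p.2] = (pr P (event_lt U Y Q0 a b))%:E.
Proof.
move=> mY YF1; have [mu [cmu muE]] := exists_coupling_law mU hU mY (fun y => congr1 (@^~ y) YF1).
by exists mu; split => //; rewrite muE prE//; exact: measurable_event_lt.
Qed.

Let coupling_event_gt a b {Y} : measurable_fun setT Y -> cdfRV P Y = F1 ->
  exists mu : probability (R * R)%type R, coupling_law F1 mu /\
    mu [set p | a < p.1 < b /\ Q0 p.1 > p.2] = (pr P (event_gt U Y Q0 a b))%:E.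
Proof.
move=> mY YF1; have [mu [cmu muE]] := exists_coupling_law mU hU mY (fun y => congr1 (@^~ y) YF1).
by exists mu; split => //; rewrite muE prE//; exact: measurable_event_gt.
Qed.

Lemma low_lt_attained a b : 0 <= a -> a < b -> b <= 1 ->
  exists mu : probability (R * R)%type R, coupling_law F1 mu /\
    mu [set p | a < p.1 < b /\ Q0 p.1 < p.2] = (low_lt F0 F1 a b)%:E.
Proof.
move=> a0 ab b1; set s := low_lt F0 F1 a b.
have s0 : 0 <= s by exact: (excessL_ge0 _ F1Q0_01).
have sba : s <= b - a by exact: (excessL_le _ F1Q0_01).
have c01 : 0 <= a + s <= 1 by apply/andP; lra.
have [mu [cmu muE]] := coupling_event_lt a b (mYrot (a + s)) (cdf_Yrot c01).
exists mu; split => //; rewrite muE; congr (_%:E); apply/eqP; rewrite eq_le; apply/andP; split.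
  apply: le_trans (pr_event_lt_rot_le P U Y1 Q0 mU hU mY1 mQ0U a b (a + s) a0 _ _ _) _;
    [lra|lra| |lra].
  move=> x /andP[sx xb]; suff : x - a - F1 (Q0 x) <= s by lra.
  by apply: low_lt_ge; apply/andP; lra.
have := excessL_le_pr_event_lt P U _ Q0 mU hU (mYrot (a + s)) mQ0U Q0_nd a b a0 ab b1.
by rewrite cdf_Yrot.
Qed.

Lemma low_gt_attained a b : 0 <= a -> a < b -> b <= 1 ->
  exists mu : probability (R * R)%type R, coupling_law F1 mu /\
    mu [set p | a < p.1 < b /\ Q0 p.1 > p.2] = (low_gt F0 F1 a b)%:E.
Proof.
move=> a0 ab b1; set s := low_gt F0 F1 a b.
have s0 : 0 <= s by exact: (excessR_ge0 _ F1Q0l_01).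
have sba : s <= b - a by exact: (excessR_le _ F1Q0l_01).
have c01 : 0 <= b - s <= 1 by apply/andP; lra.
have [mu [cmu muE]] := coupling_event_gt a b (mYrrot (b - s)) (cdf_Yrrot c01).
exists mu; split => //; rewrite muE; congr (_%:E); apply/eqP; rewrite eq_le; apply/andP; split.
  apply: le_trans (pr_event_gt_rrot_le P U Y1 Q0 mU hU mY1 mQ0U a b (b - s) _ _ b1 _) _;
    [lra|lra| |lra].
  move=> x /andP[ax xs]; suff : b - x - 1 + leftlim F1 (Q0 x) <= s by lra.
  by apply: low_gt_ge; apply/andP; lra.
have := excessR_le_pr_event_gt P U _ Q0 mU hU (mYrrot (b - s)) mQ0U Q0_nd a b a0 ab b1.
by rewrite cdf_Yrrot.
Qed.

Lemma upp_lt_approx a b : 0 <= a -> a < b -> b <= 1 -> forall e, 0 < e ->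
  exists mu : probability (R * R)%type R, coupling_law F1 mu /\
    ((upp_lt F0 F1 a b - e)%:E < mu [set p | (a < p.1 < b)%R /\ (Q0 p.1 < p.2)%R]
      < (upp_lt F0 F1 a b + e)%:E)%E.
Proof.
move=> a0 ab b1 e e0; set u := upp_lt F0 F1 a b.
have u0 : 0 <= u by rewrite subr_ge0; exact: (excessR_le _ F1Q0_01).
have uba : u <= b - a by rewrite lerBlDr lerDl; exact: (excessR_ge0 _ F1Q0_01).
have [c [ac acu cE]] : exists c, [/\ a <= c, a + u - e / 2 <= c & a < c -> c = a + u - e / 2].
  by have [h|h] := leP (a + u - e / 2) a; [exists a|exists (a + u - e / 2)]; split => //; lra.
have cb : c <= b by have [/cE|] := ltP a c; lra.
have c01 : 0 <= c <= 1 by apply/andP; lra.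
have [mu [cmu muE]] := coupling_event_lt a b (mYrot c) (cdf_Yrot c01).
exists mu; split => //; rewrite muE !lte_fin; apply/andP; split.
  have : c - a <= pr P (event_lt U (qinv F1 \o rotU (U := U) c) Q0 a b).
    apply: (le_pr_event_lt_rot P U Y1 Q0 mU hU mY1 mQ0U) => // x /andP[ax xc].
    by have := @upp_lt_le a b x; rewrite -/u (cE (lt_trans ax xc)); lra.
  lra.
have : pr P (event_lt U (qinv F1 \o rotU (U := U) c) Q0 a b) <= u.
  by have := pr_event_lt_le P U _ Q0 mU hU (mYrot c) mQ0U Q0_nd a b a0 ab b1; rewrite cdf_Yrot.
lra.
Qed.

Lemma upp_gt_approx a b : 0 <= a -> a < b -> b <= 1 -> forall e, 0 < e ->
  exists mu : probability (R * R)%type R, coupling_law F1 mu /\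
    ((upp_gt F0 F1 a b - e)%:E < mu [set p | (a < p.1 < b)%R /\ (Q0 p.1 > p.2)%R]
      < (upp_gt F0 F1 a b + e)%:E)%E.
Proof.
move=> a0 ab b1 e e0; set u := upp_gt F0 F1 a b.
have u0 : 0 <= u by rewrite subr_ge0; exact: (excessL_le _ F1Q0l_01).
have uba : u <= b - a by rewrite lerBlDr lerDl; exact: (excessL_ge0 _ F1Q0l_01).
have [c [cb cbu cE]] : exists c, [/\ c <= b, c <= b - u + e / 2 & c < b -> c = b - u + e / 2].
  by have [h|h] := leP b (b - u + e / 2); [exists b|exists (b - u + e / 2)]; split => //; lra.
have ac : a <= c by have [/cE|] := ltP c b; lra.
have c01 : 0 <= c <= 1 by apply/andP; lra.
have [mu [cmu muE]] := coupling_event_gt a b (mYrot c) (cdf_Yrot c01).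
exists mu; split => //; rewrite muE !lte_fin; apply/andP; split.
  have : b - c <= pr P (event_gt U (qinv F1 \o rotU (U := U) c) Q0 a b).
    apply: (le_pr_event_gt_rot P U Y1 Q0 mU hU mY1 mQ0U) => // x /andP[cx xb].
    by have := @upp_gt_le a b x; rewrite -/u (cE (lt_trans cx xb)); lra.
  lra.
have : pr P (event_gt U (qinv F1 \o rotU (U := U) c) Q0 a b) <= u.
  by have := pr_event_gt_le P U _ Q0 mU hU (mYrot c) mQ0U Q0_nd a b a0 ab b1; rewrite cdf_Yrot.
lra.
Qed.

Lemma bounds_monotone_lipschitz :
  [/\ monotone_lipschitz_ab (low_lt F0 F1), monotone_lipschitz_ab (upp_lt F0 F1),
      monotone_lipschitz_ab (low_gt F0 F1) & monotone_lipschitz_ab (upp_gt F0 F1)].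
Proof.
split; apply: monotone_1lipschitz_abW.
- exact: excessL_monotone_1lipschitz F1Q0_nd F1Q0_01.
- exact/monotone_1lipschitz_ab_compl/(excessR_monotone_1lipschitz _ F1Q0_nd F1Q0_01).
- exact: excessR_monotone_1lipschitz F1Q0l_nd F1Q0l_01.
- exact/monotone_1lipschitz_ab_compl/(excessL_monotone_1lipschitz _ F1Q0l_nd F1Q0l_01).
Qed.

End theorem_A4.

Theorem theoremA4 (R : realType) (d : measure_display) (T : measurableType d)
  (P : probability T R) (U Y0 Y1 : T -> R)
  (mU : measurable_fun setT U) (mY0 : measurable_fun setT Y0)
  (mY1 : measurable_fun setT Y1)
  (hU : uniform01 P U)
  (hY0 : forall t, Y0 t = qinv (cdfRV P Y0) (U t)) :
  let F0 := cdfRV P Y0 in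
  let F1 := cdfRV P Y1 in
  (forall a b : R, 0 <= a -> a < b -> b <= 1 ->
    [/\ ((low_lt F0 F1 a b)%:E <= P [set t | (a < U t < b)%R /\ (Y0 t < Y1 t)%R]
          <= (upp_lt F0 F1 a b)%:E)%E,
        ((low_gt F0 F1 a b)%:E <= P [set t | (a < U t < b)%R /\ (Y0 t > Y1 t)%R]
          <= (upp_gt F0 F1 a b)%:E)%E,
        ((exists mu : probability (R * R)%type R, (coupling_law F1 mu /\
           mu [set p | (a < p.1 < b)%R /\ (qinv F0 p.1 < p.2)%R] = (low_lt F0 F1 a b)%:E)) /\
        (exists mu : probability (R * R)%type R, (coupling_law F1 mu /\
           mu [set p | (a < p.1 < b)%R /\ (qinv F0 p.1 > p.2)%R] = (low_gt F0 F1 a b)%:E))) &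
        ((forall eps : R, 0 < eps ->
           exists mu : probability (R * R)%type R, (coupling_law F1 mu /\
           ((upp_lt F0 F1 a b - eps)%:E < mu [set p | (a < p.1 < b)%R /\ (qinv F0 p.1 < p.2)%R]
             < (upp_lt F0 F1 a b + eps)%:E)%E))) /\
        (forall eps : R, 0 < eps ->
           exists mu : probability (R * R)%type R, (coupling_law F1 mu /\
           ((upp_gt F0 F1 a b - eps)%:E < mu [set p | (a < p.1 < b)%R /\ (qinv F0 p.1 > p.2)%R]
             < (upp_gt F0 F1 a b + eps)%:E)%E))]) /\
  [/\ monotone_lipschitz_ab (low_lt F0 F1), monotone_lipschitz_ab (upp_lt F0 F1),
      monotone_lipschitz_ab (low_gt F0 F1) & monotone_lipschitz_ab (upp_gt F0 F1)].
Proof.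
move=> F0 F1; split; last exact: bounds_monotone_lipschitz.
move=> a b a0 ab b1; split.
- exact: bounds_event_lt.
- exact: bounds_event_gt.
- by split; [exact: (low_lt_attained _ U)|exact: (low_gt_attained _ U)].
- by split; [exact: (upp_lt_approx _ U)|exact: (upp_gt_approx _ U)].
Qed.
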